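(* Let $T_1,T_2$ be tables joined on column $J$, where $T_1$ has a real-valued column $W$. Let $0<p_1,q_1,p_2,q_2\le1$, $S_1=\mathrm{UBS}_{p_1,q_1}(T_1,J)$, $S_2=\mathrm{UBS}_{p_2,q_2}(T_2,J)$, $p_{\min}=\min\{p_1,p_2\}$, and let $F=\sum_{(t_1,t_2)\in S_1\bowtie_J S_2} t_1.W$. Then the estimator $\hat J_{\mathrm{sum}}=\frac{1}{p_{\min}q_1q_2}F$ satisfies $\mathrm{E}[\hat J_{\mathrm{sum}}]=E_{\mathrm{sum}}$, where $E_{\mathrm{sum}}=\sum_{(t_1,t_2)\in T_1\bowtie_J T_2} t_1.W$.
   Context: $T_1,T_2$ are finite multisets of tuples with a join attribute $J$ taking values in a finite set $\mathcal U$. $X\bowtie_J Y$ is the set of pairs $(t_1,t_2)\in X\times Y$ with $t_1.J=t_2.J$. $\mathrm{UBS}_{p,q}(T,J)$: given a hash function $h:\mathcal U\to[0,1]$, each tuple $t\in T$ with $h(t.J)<p$ is included independently with probability $q$; others are excluded. The values $h(v)$ are independent uniform on $[0,1]$, the same $h$ is used for both tables, and the Bernoulli coins are independent across all tuples and independent of $h$. *)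

From mathcomp Require Import all_boot all_order all_algebra.
From mathcomp Require Import all_classical all_reals all_analysis.
Set Implicit Arguments. Unset Strict Implicit. Unset Printing Implicit Defensive.
Import Order.TTheory GRing.Theory Num.Theory.
Local Open Scope ring_scope.
Local Open Scope classical_set_scope.

(* Tables are finite multisets of tuples: a table is a finite index type I
   (one index per tuple occurrence) together with the join attribute
   J : I -> U of each tuple; T1 also carries a real column W : I1 -> R. *)

Definition upd (R : realType) (U : eqType) (h : U -> R) (v : U) (x : R) : U -> R :=
  fun u => if u == v then x else h u.

(* Expectation over independent uniform [0,1] hash values h(v), v ranging
   over the list s: iterated Lebesgue integral over [0,1] for each v. *)
Fixpoint Eunif (R : realType) (U : eqType) (s : seq U)
  (G : (U -> R) -> R) (h : U -> R) : R :=
  match s with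
  | [::] => G h
  | v :: s' => Rintegral (@lebesgue_measure R) `[0%R, 1%R]
                 (fun x : R => Eunif s' G (upd h v x))
  end.

(* Expectation of G over the hash h : U -> [0,1] with independent uniform
   coordinates (U finite). The initial values are all overwritten. *)
Definition Ehash (R : realType) (U : finType) (G : (U -> R) -> R) : R :=
  Eunif (enum U) G (fun _ => 0).

Definition Ecoin (R : realType) (I : finType) (q : R)
  (G : {ffun I -> bool} -> R) : R :=
  \sum_(c : {ffun I -> bool}) (\prod_(i : I) (if c i then q else 1 - q)) * G c.

Definition ubs_in (R : realType) (U : finType) (I : finType) (J : I -> U)
  (p : R) (h : U -> R) (c : {ffun I -> bool}) (i : I) : bool :=
  (h (J i) < p) && c i.

Definition F_join (R : realType) (U I1 I2 : finType) (J1 : I1 -> U) (J2 : I2 -> U)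
  (W : I1 -> R) (S1 : pred I1) (S2 : pred I2) : R :=
  \sum_(i1 : I1 | S1 i1) \sum_(i2 : I2 | S2 i2 && (J1 i1 == J2 i2)) W i1.

Definition E_sum (R : realType) (U I1 I2 : finType) (J1 : I1 -> U) (J2 : I2 -> U)
  (W : I1 -> R) : R := F_join J1 J2 W predT predT.

Definition E_Jsum (R : realType) (U I1 I2 : finType) (J1 : I1 -> U) (J2 : I2 -> U)
  (W : I1 -> R) (p1 q1 p2 q2 : R) : R :=
  Ehash (fun h : U -> R =>
    Ecoin q1 (fun c1 : {ffun I1 -> bool} =>
      Ecoin q2 (fun c2 : {ffun I2 -> bool} =>
        F_join J1 J2 W (ubs_in J1 p1 h c1) (ubs_in J2 p2 h c2)
          / (Num.min p1 p2 * q1 * q2)))).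

(* Expanding F, the expectation becomes a sum over pairs (t1, t2) of
   t1.W [t1.J = t2.J] times the probability that both tuples are sampled.
   Given the hash, the independent coins keep both with probability q1 q2.
   On a joining pair the two tuples share the hash value h(v), so they pass
   their thresholds together exactly when h(v) < min(p1, p2), an event of
   probability p_min. Each joining pair thus contributes
   t1.W p_min q1 q2 to E[F], and the normalisation cancels. *)

From mathcomp Require Import all_boot all_order all_algebra.
From mathcomp Require Import all_classical all_reals all_analysis.
From mathcomp Require Import ring.
Set Implicit Arguments. Unset Strict Implicit.
Import Order.TTheory GRing.Theory Num.Theory.
Local Open Scope ring_scope.
Local Open Scope classical_set_scope.

Section ThresholdIntegral.
Variable R : realType.
Local Notation mu := (@lebesgue_measure R).

Lemma lebesgue_measure_itv01 : mu (`[0%R, 1%R] : set R) = 1%:E.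
Proof. by rewrite lebesgue_measure_itv /= lte_fin ltr01 oppr0 adde0. Qed.

Lemma threshold_indic_itv (m x : R) :
  0 <= x -> (x < m)%R%:R = \1_`[0%R, m[ x :> R.
Proof.
move=> x0; rewrite indicE; have [xm|xm] := ltP x m.
  by rewrite mem_set //= in_itv /= x0 xm.
by rewrite memNset //= in_itv /= x0 ltNge xm.
Qed.

Lemma Rintegral01_threshold_affine (C a m : R) : 0 <= m <= 1 ->
  \int[mu]_(x in `[0%R, 1%R]) (C + a * (x < m)%R%:R) = C + a * m.
Proof.
case/andP=> m0 m1.
pose A : set R := `[0%R, m[.
have mA : measurable A by exact: measurable_itv.
have iA : mu.-integrable `[0%R, 1%R] (EFin \o \1_A).
  exact: integrableS (integrable_indic_itv _ _ _ _).
have iC : mu.-integrable `[0%R, 1%R] (EFin \o cst C).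
  apply: measurable_bounded_integrable => //; last exact: bounded_cst.
  by rewrite [X in (X < _)%E]lebesgue_measure_itv01 ltry.
have AI : A `&` `[0%R, 1%R] = A.
  apply/setIidPl => x; rewrite /A /= !in_itv /= => /andP[x0 xm].
  by rewrite x0 (le_trans (ltW xm) m1).
have muA : mu A = m%:E.
  rewrite lebesgue_measure_itv /= lte_fin oppr0 adde0.
  by case: ltgtP m0 => // <-.
transitivity (\int[mu]_(x in `[0%R, 1%R]) (C + a * \1_A x)).
  apply: eq_Rintegral => x; rewrite inE /= in_itv /= => /andP[x0 _].
  by rewrite threshold_indic_itv.
rewrite RintegralD //; last first.
  by rewrite (_ : EFin \o _ = fun x => (a%:E * (EFin \o \1_A) x)%E);
    [exact: integrableZl | apply/funext => x /=; rewrite EFinM].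
rewrite Rintegral_cst // [X in fine X]lebesgue_measure_itv01 mulr1.
rewrite RintegralZl //.
by rewrite /Rintegral integral_indic // AI [X in fine X]muA.
Qed.

End ThresholdIntegral.

Section HashThreshold.
Variables (R : realType) (U : finType) (m : R).
Hypothesis m01 : 0 <= m <= 1.

Lemma Eunif_threshold_sum (a : U -> R) (s : seq U) (h0 : U -> R) : uniq s ->
  Eunif s (fun h => \sum_v a v * (h v < m)%R%:R) h0 =
  \sum_(v | v \in s) a v * m + \sum_(v | v \notin s) a v * (h0 v < m)%R%:R.
Proof.
elim: s h0 => [|v s IHs] h0 /=.
  by move=> _; rewrite [X in _ = X + _]big_pred0 // add0r.
case/andP=> vNs s_uniq.
set C := \sum_(w | w \in s) a w * m
  + \sum_(w | (w \notin s) && (w != v)) a w * (h0 w < m)%R%:R.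
transitivity
  (\int[@lebesgue_measure R]_(x in `[0%R, 1%R]) (C + a v * (x < m)%R%:R)).
  apply: eq_Rintegral => x _; rewrite IHs // /C -addrA; congr (_ + _).
  rewrite (bigD1 v) //= /upd eqxx addrC; congr (_ + _).
  by apply: eq_bigr => w /andP[_ /negbTE ->].
rewrite Rintegral01_threshold_affine // /C -addrA [X in _ + X]addrC addrA.
congr (_ + _); last by apply: eq_bigl => w; rewrite in_cons negb_or andbC.
rewrite [RHS](bigD1 v) ?mem_head //= addrC; congr (_ + _).
apply: eq_bigl => w; rewrite in_cons.
by case: eqP => [->|]; [rewrite (negbTE vNs) | rewrite andbT].
Qed.

Lemma Ehash_threshold_sum (K : finType) (key : K -> U) (a : K -> R) :
  Ehash (fun h => \sum_k a k * (h (key k) < m)%R%:R) = \sum_k a k * m.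
Proof.
pose b v := \sum_(k | key k == v) a k.
have by_key (g : U -> R) : \sum_k a k * g (key k) = \sum_v b v * g v.
  rewrite (partition_big key predT) //; apply: eq_bigr => v _.
  by rewrite mulr_suml; apply: eq_bigr => k /eqP ->.
rewrite (_ : (fun h => _) = fun h => \sum_v b v * (h v < m)%R%:R); last first.
  by apply/funext => h; rewrite (by_key (fun v => (h v < m)%R%:R)).
rewrite /Ehash Eunif_threshold_sum ?enum_uniq //.
rewrite [X in _ + X]big_pred0 => [|v]; last by rewrite mem_enum.
rewrite addr0 (by_key (fun _ => m)); apply: eq_bigl => v.
by rewrite mem_enum.
Qed.

End HashThreshold.

Section Coins.
Variable R : realType.

Lemma eq_Ecoin (I : finType) (q : R) (F G : {ffun I -> bool} -> R) :
  F =1 G -> Ecoin q F = Ecoin q G.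
Proof. by move=> FG; apply: eq_bigr => c _; rewrite FG. Qed.

Lemma EcoinMr (I : finType) (q a : R) (F : {ffun I -> bool} -> R) :
  Ecoin q (fun c => F c * a) = Ecoin q F * a.
Proof. by rewrite /Ecoin mulr_suml; apply: eq_bigr => c _; rewrite mulrA. Qed.

Lemma Ecoin_sum (I K : finType) (q : R) (F : K -> {ffun I -> bool} -> R) :
  Ecoin q (fun c => \sum_k F k c) = \sum_k Ecoin q (F k).
Proof.
by rewrite /Ecoin; under eq_bigr do rewrite mulr_sumr; exact: exchange_big.
Qed.

Lemma Ecoin_coin (I : finType) (q : R) (i : I) (b : R) :
  Ecoin q (fun c => (c i)%:R * b) = q * b.
Proof.
pose w j (x : bool) : R :=
  (if j == i then x%:R else 1) * (if x then q else 1 - q).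
transitivity ((\sum_(c : {ffun I -> bool}) \prod_j w j (c j)) * b).
  rewrite mulr_suml; apply: eq_bigr => c _; rewrite mulrA; congr (_ * _).
  rewrite (bigD1 i) //= [RHS](bigD1 i) //= /w eqxx mulrAC (mulrC (c i)%:R).
  congr (_ * _).
  by apply: eq_bigr => j /negbTE ->; rewrite mul1r.
have other_coins : \prod_(j | j != i) \sum_x w j x = 1.
  by apply: big1 => j /negbTE ji; rewrite /w ji big_bool /= !mul1r addrC subrK.
rewrite -bigA_distr_bigA (bigD1 i) //= other_coins /w eqxx big_bool /=.
by rewrite mul0r addr0 !mul1r mulr1.
Qed.

Lemma Ecoin2_bilinear (I1 I2 : finType) (q1 q2 : R) (X : I1 * I2 -> R) :
  Ecoin q1 (fun c1 => Ecoin q2 (fun c2 =>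
    \sum_k (c1 k.1)%:R * (c2 k.2)%:R * X k)) = q1 * q2 * \sum_k X k.
Proof.
have inner (c1 : {ffun I1 -> bool}) :
    Ecoin q2 (fun c2 => \sum_k (c1 k.1)%:R * (c2 k.2)%:R * X k) =
    \sum_k (c1 k.1)%:R * (q2 * X k).
  rewrite Ecoin_sum; apply: eq_bigr => k _.
  rewrite (@eq_Ecoin _ _ _ (fun c2 => (c2 k.2)%:R * ((c1 k.1)%:R * X k))).
    by rewrite Ecoin_coin mulrCA.
  by move=> c2; rewrite mulrAC mulrC.
rewrite (eq_Ecoin q1 inner) Ecoin_sum mulr_sumr; apply: eq_bigr => k _.
by rewrite Ecoin_coin mulrA.
Qed.

End Coins.

Section JoinSum.
Variables (R : realType) (U I1 I2 : finType) (J1 : I1 -> U) (J2 : I2 -> U).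
Variable W : I1 -> R.

Lemma F_join_pairsE (S1 : pred I1) (S2 : pred I2) :
  F_join J1 J2 W S1 S2 =
  \sum_k (S1 k.1)%:R * (S2 k.2)%:R * ((J1 k.1 == J2 k.2)%:R * W k.1).
Proof.
rewrite /F_join -(pair_bigA _ (fun i1 i2 =>
  (S1 i1)%:R * (S2 i2)%:R * ((J1 i1 == J2 i2)%:R * W i1))) big_mkcond /=.
apply: eq_bigr => i1 _.
rewrite big_mkcond /=; case: (S1 i1).
  by apply: eq_bigr => i2 _; case: (S2 i2); case: (J1 i1 == J2 i2);
    rewrite /= ?mul1r ?mul0r.
by rewrite big1 // => i2; rewrite !mul0r.
Qed.

Lemma Ecoin2_F_join_ubs (p1 q1 p2 q2 : R) (h : U -> R) :
  Ecoin q1 (fun c1 => Ecoin q2 (fun c2 =>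
    F_join J1 J2 W (ubs_in J1 p1 h c1) (ubs_in J2 p2 h c2))) =
  q1 * q2 *
  \sum_k (h (J1 k.1) < Num.min p1 p2)%R%:R * ((J1 k.1 == J2 k.2)%:R * W k.1).
Proof.
pose X k := (h (J1 k.1) < p1)%R%:R * (h (J2 k.2) < p2)%R%:R *
  ((J1 k.1 == J2 k.2)%:R * W k.1).
transitivity (Ecoin q1 (fun c1 => Ecoin q2 (fun c2 =>
    \sum_k (c1 k.1)%:R * (c2 k.2)%:R * X k))).
  apply: eq_Ecoin => c1; apply: eq_Ecoin => c2.
  rewrite F_join_pairsE; apply: eq_bigr => k _.
  by rewrite /ubs_in -!mulnb !natrM /X; ring.
rewrite Ecoin2_bilinear; congr (_ * _); apply: eq_bigr => k _.
rewrite /X; case: eqP => [<-|_]; last by rewrite !(mul0r, mulr0).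
by rewrite -natrM mulnb -lt_min.
Qed.

End JoinSum.

Theorem lemma4 (R : realType) (U I1 I2 : finType)
  (J1 : I1 -> U) (J2 : I2 -> U) (W : I1 -> R) (p1 q1 p2 q2 : R) :
  0 < p1 -> p1 <= 1 -> 0 < q1 -> q1 <= 1 ->
  0 < p2 -> p2 <= 1 -> 0 < q2 -> q2 <= 1 ->
  E_Jsum J1 J2 W p1 q1 p2 q2 = E_sum J1 J2 W.
Proof.
move=> p1_gt0 p1_le1 q1_gt0 _ p2_gt0 _ q2_gt0 _.
set m := Num.min p1 p2.
have m_gt0 : 0 < m by rewrite lt_min p1_gt0 p2_gt0.
pose w (k : I1 * I2) := (J1 k.1 == J2 k.2)%:R * W k.1.
rewrite /E_Jsum
  (_ : (fun h => _) = fun h => \sum_k w k / m * (h (J1 k.1) < m)%R%:R).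
  rewrite Ehash_threshold_sum; last by rewrite (ltW m_gt0) ge_min p1_le1.
  rewrite /E_sum F_join_pairsE; apply: eq_bigr => k _.
  by rewrite divfK ?gt_eqF //= !mul1r.
apply/funext => h; under eq_Ecoin do rewrite EcoinMr.
rewrite EcoinMr Ecoin2_F_join_ubs -/m mulr_sumr mulr_suml.
apply: eq_bigr => k _.
by rewrite /w; field; rewrite !gt_eqF.
Qed.
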